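(* Let $(X,\mathrm{dist})$ be a metric space and $\Sigma$ a compact metric space. Let $T(h):\Sigma\to\Sigma$, $h\ge0$, be a semigroup with $T(h)\Sigma=\Sigma$ for all $h\ge0$, and let $\{U_\sigma(t,\tau)\}_{\sigma\in\Sigma}$ be a family of processes on $X$ satisfying $U_\sigma(h+t,h+\tau)=U_{T(h)\sigma}(t,\tau)$ for all $\sigma\in\Sigma$, $h\ge0$, $t\ge\tau$. Let $S(h)(x,\sigma)=(U_\sigma(h,0)x,T(h)\sigma)$ be the skew-product semigroup on $X\times\Sigma$. Suppose the family $U_\sigma(t,\tau)$ is asymptotically closed with respect to a sequence $h_k$, and $T(h_k)$ is continuous for every $k$. Then $S(h)$ is asymptotically closed with respect to the same sequence $h_k$.
   Context: A process on $X$ is a family of maps $U(t,\tau):X\to X$, indexed by reals $t\ge\tau$, with $U(\tau,\tau)=\mathrm{id}_X$ and $U(t,\tau)=U(t,s)U(s,\tau)$ for $t\ge s\ge\tau$. The family $U_\sigma(t,\tau)$ is asymptotically closed with respect to a (finite with at least two terms, or infinite) sequence of times $0=h_0<h_1<h_2<\cdots$ if: whenever $\sigma_n\to\sigma\in\Sigma$ and $U_{\sigma_n}(h_k,0)x_n\to\xi^k\in X$ as $n\to\infty$ for every $k$, then $U_\sigma(h_k,0)\xi^0=\xi^k$ for every $k$. A semigroup $V(h)$ on a metric space $Y$ is asymptotically closed with respect to such a sequence $h_k$ if whenever $V(h_k)y_n\to\eta^k\in Y$ as $n\to\infty$ for every $k$, then $V(h_k)\eta^0=\eta^k$ for every $k$.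 $X\times\Sigma$ carries the product metric. *)

From HB Require Import structures.
From mathcomp Require Import all_boot all_order all_algebra.
From mathcomp Require Import all_classical all_reals all_analysis.
Set Implicit Arguments. Unset Strict Implicit. Unset Printing Implicit Defensive.
Import Order.TTheory GRing.Theory Num.Theory.
Local Open Scope classical_set_scope.
Local Open Scope ring_scope.

(* A sequence of times 0 = h_0 < h_1 < ..., indexed by the set K of admissible
   indices: either K = all of nat (infinite sequence), or K = {0,...,N-1}
   with N >= 2 (finite sequence with at least two terms). *)
Definition time_sequence {R : realType} (K : set nat) (h : nat -> R) : Prop :=
  (K = setT \/ exists N : nat, (2 <= N)%N /\ K = [set k | (k < N)%N]) /\
  h 0%N = 0 /\ (forall k, K k.+1 -> h k < h k.+1).

Definition is_process {R : realType} {X : Type} (U : R -> R -> X -> X) : Prop :=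
  (forall tau, U tau tau = id) /\
  (forall t s tau, s <= t -> tau <= s -> U t tau = U t s \o U s tau).

Definition is_semigroup {R : realType} {Y : Type} (T : R -> Y -> Y) : Prop :=
  T 0 = id /\ (forall h s, 0 <= h -> 0 <= s -> T (h + s) = T h \o T s).

Definition family_asymptotically_closed {R : realType} {X : pseudoMetricType R}
  {Sigma : pseudoMetricType R} (U : Sigma -> R -> R -> X -> X)
  (K : set nat) (h : nat -> R) : Prop :=
  forall (sigman : nat -> Sigma) (sigma : Sigma) (xn : nat -> X) (xi : nat -> X),
    sigman @ \oo --> sigma ->
    (forall k, K k -> (fun n => U (sigman n) (h k) 0 (xn n)) @ \oo --> xi k) ->
    forall k, K k -> U sigma (h k) 0 (xi 0%N) = xi k.

Definition semigroup_asymptotically_closed {R : realType} {Y : pseudoMetricType R}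
  (V : R -> Y -> Y) (K : set nat) (h : nat -> R) : Prop :=
  forall (yn : nat -> Y) (eta : nat -> Y),
    (forall k, K k -> (fun n => V (h k) (yn n)) @ \oo --> eta k) ->
    forall k, K k -> V (h k) (eta 0%N) = eta k.

Definition skew_product {R : realType} {X Sigma : Type}
  (U : Sigma -> R -> R -> X -> X) (T : R -> Sigma -> Sigma) :
  R -> X * Sigma -> X * Sigma :=
  fun t p => (U p.2 t 0 p.1, T t p.2).

From HB Require Import structures.
From mathcomp Require Import all_boot all_order all_algebra.
From mathcomp Require Import all_classical all_reals all_analysis.
Import Order.TTheory GRing.Theory Num.Theory.
Local Open Scope classical_set_scope.
Local Open Scope ring_scope.

(* Convergence in X * Sigma is convergence of both components.  The second
   components of the y_n converge because S(h_0) = S(0) is the identity; the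
   first components then satisfy the hypothesis of the asymptotic closedness of
   U_sigma, which gives the first component of the claim, and the continuity of
   T(h_k) together with uniqueness of limits in Sigma gives the second one. *)

Lemma time_sequence_0 {R : realType} (K : set nat) (h : nat -> R) :
  time_sequence K h -> K 0%N.
Proof. by case=> [[->|[N [N2 ->]]] _] //=; apply: leq_trans N2. Qed.

Section ProductConvergence.
Context {R : realType} {T : Type} {U V : pseudoMetricType R} {F : set_system T}.

Lemma cvg_fst_comp {f : T -> U * V} {p : U * V} :
  f @ F --> p -> (fun t => (f t).1) @ F --> p.1.
Proof. by case: p => a b /cvg_comp; apply; apply: cvg_fst. Qed.

Lemma cvg_snd_comp {f : T -> U * V} {p : U * V} :
  f @ F --> p -> (fun t => (f t).2) @ F --> p.2.
Proof. by case: p => a b /cvg_comp; apply; apply: cvg_snd. Qed.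

End ProductConvergence.

Lemma skew_product_asymptotically_closed {R : realType}
  (X : pseudoMetricType R) (Sigma : metricType R)
  (T : R -> Sigma -> Sigma) (U : Sigma -> R -> R -> X -> X)
  (K : set nat) (h : nat -> R) :
  K 0%N -> h 0%N = 0 -> T 0 = id ->
  family_asymptotically_closed U K h ->
  (forall k, K k -> continuous (T (h k))) ->
  semigroup_asymptotically_closed (skew_product U T) K h.
Proof.
move=> K0 h0 T0 Uclosed Tcont yn eta Scvg k Kk.
have sigma_cvg : (fun n => (yn n).2) @ \oo --> (eta 0%N).2.
  by have := cvg_snd_comp (Scvg _ K0); rewrite /skew_product /= h0 T0.
have x_part : U (eta 0%N).2 (h k) 0 (eta 0%N).1 = (eta k).1.
  apply: (Uclosed _ _ _ (fun j => (eta j).1) sigma_cvg) => // j Kj.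
  exact: (cvg_fst_comp (Scvg _ Kj)).
have sigma_part : T (h k) (eta 0%N).2 = (eta k).2.
  apply: (cvg_unique (@metric_hausdorff R Sigma)
    (cvg_comp _ _ sigma_cvg (Tcont k Kk _))).
  exact: (cvg_snd_comp (Scvg _ Kk)).
by rewrite /skew_product /= x_part sigma_part; case: (eta k).
Qed.

Theorem proposition6p5 (R : realType) (X : metricType R) (Sigma : metricType R)
  (T : R -> Sigma -> Sigma) (U : Sigma -> R -> R -> X -> X)
  (K : set nat) (h : nat -> R) :
  compact [set: Sigma] ->
  is_semigroup T ->
  (forall t, 0 <= t -> T t @` [set: Sigma] = [set: Sigma]) ->
  (forall sigma, is_process (U sigma)) ->
  (forall sigma t tau s, 0 <= s -> tau <= t ->
     U sigma (s + t) (s + tau) = U (T s sigma) t tau) ->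
  time_sequence K h ->
  family_asymptotically_closed U K h ->
  (forall k, K k -> continuous (T (h k))) ->
  semigroup_asymptotically_closed (skew_product U T) K h.
Proof.
move=> _ [T0 _] _ _ _ hseq.
apply: skew_product_asymptotically_closed T0 => //.
- exact: time_sequence_0 hseq.
- by case: hseq => _ [].
Qed.
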